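(* A $\mathbb{B}$-topological space $(X,\tau)$ is $R_1$ if and only if both topological spaces $(X,\tau[tt])$ and $(X,\tau[ff])$ are $R_1$. Consequently, $(X,\tau)$ is Hausdorff if and only if $(X,\tau[tt])$ and $(X,\tau[ff])$ are $R_1$ and the topological space $(X,\tau[tt]\vee\tau[ff])$ is $T_0$.
   Context: $\mathbb{B}=\{0,1,tt,ff\}$ is the four-element Boolean algebra with bottom $0$, top $1$, and $tt,ff$ incomparable complements; $\neg$ its complement, $a\to b=\neg a\vee b$. A $\mathbb{B}$-topology on $X$ is $\tau\subseteq\mathbb{B}^X$ containing all constant maps and closed under arbitrary pointwise joins and finite pointwise meets; $\mu\in\mathbb{B}^X$ is closed if $\neg\mu\in\tau$. $\tau[b]=\{\lambda[b]:\lambda\in\tau\}$, $\lambda[b]=\{x:\lambda(x)\ge b\}$; $\tau[tt]\vee\tau[ff]$ is the topology generated by their union. Specialization $\mathbb{B}$-order: $\Omega(\tau)(x,y)=\bigwedge_{\lambda\in\tau}(\lambda(x)\to\lambda(y))$. The product $(X,\tau)\times(X,\tau)$ is $X\times X$ with the $\mathbb{B}$-topology generated by the constants and $\{\lambda\circ\pi_1,\lambda\circ\pi_2:\lambda\in\tau\}$. $(X,\tau)$ is $R_1$ if $\Omega(\tau)\colon X\times X\to\mathbb{B}$ is a closed set of $(X,\tau)\times(X,\tau)$; $T_0$ if $\Omega(\tau)(x,y)=1=\Omega(\tau)(y,x)$ implies $x=y$; Hausdorff if $T_0$ and $R_1$. A topological space is $R_1$ if any two points with distinct closures of singletons have disjoint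 neighbourhoods. *)

(* Sets are predicates X -> Prop; classical logic is used to
   define arbitrary joins/meets in the four-element Boolean algebra. *)
From Stdlib Require Import Classical ClassicalEpsilon.

Inductive B : Type := b0 | b1 | btt | bff.

Definition Ble (a b : B) : Prop :=
  match a, b with
  | b0, _ => True
  | _, b1 => True
  | btt, btt => True
  | bff, bff => True
  | _, _ => False
  end.

Definition Bneg (a : B) : B :=
  match a with b0 => b1 | b1 => b0 | btt => bff | bff => btt end.

Definition Bjoin (a b : B) : B :=
  match a, b with
  | b0, c => c | c, b0 => c
  | b1, _ => b1 | _, b1 => b1
  | btt, btt => btt | bff, bff => bff
  | _, _ => b1
  end.

Definition Bmeet (a b : B) : B := Bneg (Bjoin (Bneg a) (Bneg b)).

Definition Bimp (a b : B) : B := Bjoin (Bneg a) b.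

Definition pdec (P : Prop) : bool :=
  if excluded_middle_informative P then true else false.

Definition Bof (t f : bool) : B :=
  match t, f with
  | true, true => b1 | true, false => btt | false, true => bff | false, false => b0
  end.

(** Supremum / infimum of an arbitrary subset S of B (B is a complete lattice):
    sup S >= tt iff some element of S is >= tt, etc. *)
Definition Bsup (S : B -> Prop) : B :=
  Bof (pdec (exists b, S b /\ Ble btt b)) (pdec (exists b, S b /\ Ble bff b)).

Definition Binf (S : B -> Prop) : B :=
  Bof (pdec (forall b, S b -> Ble btt b)) (pdec (forall b, S b -> Ble bff b)).

Definition is_Btopology {X : Type} (tau : (X -> B) -> Prop) : Prop :=
  (forall c : B, tau (fun _ => c)) /\
  (forall Lam : (X -> B) -> Prop, (forall l, Lam l -> tau l) ->
     tau (fun x => Bsup (fun b => exists l, Lam l /\ l x = b))) /\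
  (forall l m, tau l -> tau m -> tau (fun x => Bmeet (l x) (m x))).

Definition Bclosed {X : Type} (tau : (X -> B) -> Prop) (mu : X -> B) : Prop :=
  tau (fun x => Bneg (mu x)).

Definition Bgenerated {X : Type} (S : (X -> B) -> Prop) : (X -> B) -> Prop :=
  fun l => forall T, is_Btopology T -> (forall m, S m -> T m) -> T l.

Definition Bprod {X : Type} (tau : (X -> B) -> Prop) : (X * X -> B) -> Prop :=
  Bgenerated (fun m =>
    (exists c : B, m = fun _ => c) \/
    (exists l, tau l /\ m = fun p => l (fst p)) \/
    (exists l, tau l /\ m = fun p => l (snd p))).

Definition Omega {X : Type} (tau : (X -> B) -> Prop) : X * X -> B :=
  fun p => Binf (fun b => exists l, tau l /\ b = Bimp (l (fst p)) (l (snd p))).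

Definition B_R1 {X : Type} (tau : (X -> B) -> Prop) : Prop :=
  Bclosed (Bprod tau) (Omega tau).

Definition B_T0 {X : Type} (tau : (X -> B) -> Prop) : Prop :=
  forall x y : X, Omega tau (x, y) = b1 -> Omega tau (y, x) = b1 -> x = y.

Definition B_Hausdorff {X : Type} (tau : (X -> B) -> Prop) : Prop :=
  B_T0 tau /\ B_R1 tau.

Definition is_topology {X : Type} (T : (X -> Prop) -> Prop) : Prop :=
  T (fun _ => True) /\
  (forall F : (X -> Prop) -> Prop, (forall U, F U -> T U) ->
     T (fun x => exists U, F U /\ U x)) /\
  (forall U V, T U -> T V -> T (fun x => U x /\ V x)).

(** tau[b] = { lambda[b] : lambda in tau }, lambda[b] = { x | lambda x >= b }. *)
Definition cut {X : Type} (tau : (X -> B) -> Prop) (b : B) : (X -> Prop) -> Prop :=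
  fun U => exists l, tau l /\ forall x, U x <-> Ble b (l x).

Definition generated {X : Type} (S : (X -> Prop) -> Prop) : (X -> Prop) -> Prop :=
  fun U => forall T, is_topology T -> (forall V, S V -> T V) -> T U.

Definition top_join {X : Type} (T1 T2 : (X -> Prop) -> Prop) : (X -> Prop) -> Prop :=
  generated (fun U => T1 U \/ T2 U).

(** Closure of a singleton {x}: the points y every open neighbourhood of
    which contains x. *)
Definition cl1 {X : Type} (T : (X -> Prop) -> Prop) (x : X) : X -> Prop :=
  fun y => forall U, T U -> U y -> U x.

Definition top_R1 {X : Type} (T : (X -> Prop) -> Prop) : Prop :=
  forall x y : X, ~ (forall z, cl1 T x z <-> cl1 T y z) ->
    exists U V, T U /\ T V /\ U x /\ V y /\ (forall z, ~ (U z /\ V z)).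

Definition top_T0 {X : Type} (T : (X -> Prop) -> Prop) : Prop :=
  forall x y : X, x <> y ->
    exists U, T U /\ ((U x /\ ~ U y) \/ (U y /\ ~ U x)).

(* An element of B is determined by which of the two atoms tt, ff lie below it, and the
   operations of B act on these two bits separately; at the atom k, Omega tau (x, y) says
   that x lies in the closure of y for the topology tau[k].  Closedness of Omega in the
   product then means: whenever x is not in the k-closure of y, some open k-rectangle
   around (x, y) avoids the diagonal, i.e. x and y have disjoint tau[k]-neighbourhoods.
   This separation property is equivalent to R1 for an ordinary topology.  Conversely,
   such rectangles, cut down to the atom k, are product-open and exhaust the complement
   of Omega.  For T0, Omega (x, y) = 1 = Omega (y, x) says that x and y have the same
   neighbourhoods in both tau[tt] and tau[ff], hence in their join. *)
From Stdlib Require Import Classical ClassicalEpsilon FunctionalExtensionality Setoid.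

Definition atom (k : bool) : B := if k then btt else bff.

Lemma Ble_atoms a d : Ble a d <-> (forall k, Ble (atom k) a -> Ble (atom k) d).
Proof.
  split.
  - intros H k; destruct a, d, k; simpl in *; tauto.
  - intros H; pose proof (H true); pose proof (H false); destruct a, d; simpl in *; tauto.
Qed.

Lemma B_eq_atoms a d : (forall k, Ble (atom k) a <-> Ble (atom k) d) -> a = d.
Proof.
  intros H; pose proof (H true); pose proof (H false);
  destruct a, d; simpl in *; try reflexivity; exfalso; tauto.
Qed.

Lemma atom_le_neg k a : Ble (atom k) (Bneg a) <-> ~ Ble (atom k) a.
Proof. destruct k, a; simpl; tauto. Qed.

Lemma atom_le_meet k a d : Ble (atom k) (Bmeet a d) <-> Ble (atom k) a /\ Ble (atom k) d.
Proof. destruct k, a, d; simpl; tauto. Qed.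

Lemma atom_le_imp k a d : Ble (atom k) (Bimp a d) <-> (Ble (atom k) a -> Ble (atom k) d).
Proof. destruct k, a, d; simpl; tauto. Qed.

Lemma atom_le_one k : Ble (atom k) b1.
Proof. destruct k; exact I. Qed.

Lemma atom_le_atom k k' : Ble (atom k') (atom k) <-> k' = k.
Proof. destruct k, k'; simpl; split; congruence || tauto. Qed.

Lemma atom_le_sup k S : Ble (atom k) (Bsup S) <-> exists b, S b /\ Ble (atom k) b.
Proof.
  unfold Bsup, pdec.
  destruct (excluded_middle_informative (exists b, S b /\ Ble btt b));
  destruct (excluded_middle_informative (exists b, S b /\ Ble bff b));
  destruct k; simpl; firstorder.
Qed.

Lemma atom_le_inf k S : Ble (atom k) (Binf S) <-> forall b, S b -> Ble (atom k) b.
Proof.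
  unfold Binf, pdec.
  destruct (excluded_middle_informative (forall b, S b -> Ble btt b));
  destruct (excluded_middle_informative (forall b, S b -> Ble bff b));
  destruct k; simpl; firstorder.
Qed.

Lemma cut_level {X} (tau : (X -> B) -> Prop) b l :
  tau l -> cut tau b (fun z => Ble b (l z)).
Proof. intros Hl; exists l; split; [exact Hl | tauto]. Qed.

Lemma atom_le_Omega {X} (tau : (X -> B) -> Prop) k x y :
  Ble (atom k) (Omega tau (x, y)) <-> cl1 (cut tau (atom k)) y x.
Proof.
  unfold Omega, cl1; rewrite atom_le_inf; simpl. split.
  - intros H U [l [Hl HU]] Ux. apply HU.
    assert (Himp : Ble (atom k) (Bimp (l x) (l y))) by (apply H; eauto).
    rewrite atom_le_imp in Himp. apply Himp, HU, Ux.
  - intros H b [l [Hl ->]]. rewrite atom_le_imp.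
    exact (H _ (cut_level tau (atom k) l Hl)).
Qed.

Lemma Omega_eq_one {X} (tau : (X -> B) -> Prop) x y :
  Omega tau (x, y) = b1 <-> forall k, cl1 (cut tau (atom k)) y x.
Proof.
  split.
  - intros H k. apply atom_le_Omega. rewrite H. apply atom_le_one.
  - intros H. apply B_eq_atoms. intros k.
    split; intros _; [apply atom_le_one | apply atom_le_Omega, H].
Qed.

Definition R1_separation {X} (T : (X -> Prop) -> Prop) : Prop :=
  forall x y, ~ cl1 T y x ->
    exists U V, T U /\ T V /\ U x /\ V y /\ (forall z, ~ (U z /\ V z)).

(* Distinct closures of singletons means that one of x, y is outside the closure of the
   other, since x and y lie in each other's closures iff cl{x} = cl{y}. *)
Lemma top_R1_separation {X} (T : (X -> Prop) -> Prop) : top_R1 T <-> R1_separation T.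
Proof.
  split.
  - intros HR x y Hyx. apply HR. intros Hcl. apply Hyx, (proj1 (Hcl x)). intros U _ Ux; exact Ux.
  - intros Hsep x y Hcl.
    destruct (classic (cl1 T y x)) as [Hyx | Hyx]; [| exact (Hsep x y Hyx)].
    destruct (classic (cl1 T x y)) as [Hxy | Hxy].
    + exfalso. apply Hcl. intros z; split; intros Hz U HU Uz; [exact (Hyx U HU (Hz U HU Uz)) | exact (Hxy U HU (Hz U HU Uz))].
    + destruct (Hsep y x Hxy) as [U [V [HU [HV [Uy [Vx Hdisj]]]]]].
      exists V, U. repeat split; auto. intros z [Vz Uz]. exact (Hdisj z (conj Uz Vz)).
Qed.

Lemma cut_incl_join {X} (tau : (X -> B) -> Prop) k U :
  cut tau (atom k) U -> top_join (cut tau (atom true)) (cut tau (atom false)) U.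
Proof. intros HU T _ Hgen. apply Hgen. destruct k; [left | right]; exact HU. Qed.

Lemma Bgenerated_Btopology {X} (S : (X -> B) -> Prop) : is_Btopology (Bgenerated S).
Proof.
  split; [| split].
  - intros c T [Tc _] _. apply Tc.
  - intros Lam HLam T HT HS. apply (proj1 (proj2 HT)). intros l Hl. exact (HLam l Hl T HT HS).
  - intros l m Hl Hm T HT HS. apply (proj2 (proj2 HT)); [exact (Hl T HT HS) | exact (Hm T HT HS)].
Qed.

Lemma Btopology_local {X} (T : (X -> B) -> Prop) f :
  is_Btopology T ->
  (forall p k, Ble (atom k) (f p) ->
     exists m, T m /\ (forall q, Ble (m q) (f q)) /\ Ble (atom k) (m p)) ->
  T f.
Proof.
  intros [_ [Tsup _]] Hloc.
  pose (Lam := fun m => T m /\ forall q, Ble (m q) (f q)).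
  replace f with (fun p => Bsup (fun b => exists m, Lam m /\ m p = b)).
  - apply Tsup. intros m [Hm _]; exact Hm.
  - apply functional_extensionality. intros p. apply B_eq_atoms. intros k.
    rewrite atom_le_sup. split.
    + intros [b [[m [[_ Hmf] <-]] Hk]]. exact (proj1 (Ble_atoms _ _) (Hmf p) k Hk).
    + intros Hk. destruct (Hloc p k Hk) as [m [Hm [Hmf Hmp]]]. exists (m p); split; eauto.
      exists m. repeat split; auto.
Qed.

Definition rect_open {X} (tau : (X -> B) -> Prop) (m : X * X -> B) : Prop :=
  forall k p, Ble (atom k) (m p) -> exists l1 l2, tau l1 /\ tau l2 /\
    Ble (atom k) (l1 (fst p)) /\ Ble (atom k) (l2 (snd p)) /\
    forall q, Ble (atom k) (l1 (fst q)) -> Ble (atom k) (l2 (snd q)) -> Ble (atom k) (m q).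

Lemma rect_open_Btopology {X} (tau : (X -> B) -> Prop) :
  is_Btopology tau -> is_Btopology (rect_open tau).
Proof.
  intros [Tc [_ Tmeet]]. split; [| split].
  - intros c k p Hc. exists (fun _ => b1), (fun _ => b1).
    repeat split; auto using atom_le_one.
  - intros Lam HLam k p Hk. rewrite atom_le_sup in Hk.
    destruct Hk as [b [[l [Hl <-]] Hk]].
    destruct (HLam l Hl k p Hk) as [l1 [l2 [H1 [H2 [H1p [H2p Hrect]]]]]].
    exists l1, l2. repeat split; auto. intros q Hq1 Hq2. apply atom_le_sup. exists (l q). eauto.
  - intros l m Hl Hm k p Hk. rewrite atom_le_meet in Hk. destruct Hk as [Hlk Hmk].
    destruct (Hl k p Hlk) as [l1 [l2 [H1 [H2 [H1p [H2p Hrect]]]]]].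
    destruct (Hm k p Hmk) as [l1' [l2' [H1' [H2' [H1p' [H2p' Hrect']]]]]].
    exists (fun x => Bmeet (l1 x) (l1' x)), (fun x => Bmeet (l2 x) (l2' x)).
    repeat split; try apply Tmeet; try apply atom_le_meet; auto.
    intros q Hq1 Hq2. rewrite atom_le_meet in Hq1, Hq2 |- *. intuition.
Qed.

Lemma Bprod_rect_open {X} (tau : (X -> B) -> Prop) m :
  is_Btopology tau -> Bprod tau m -> rect_open tau m.
Proof.
  intros Htau Hm. pose proof (rect_open_Btopology tau Htau) as Hrect.
  apply Hm; [exact Hrect |].
  intros m' [[c ->] | [[l [Hl ->]] | [l [Hl ->]]]].
  - apply Hrect.
  - intros k p Hk. exists l, (fun _ => b1). repeat split; auto using atom_le_one. apply Htau.
  - intros k p Hk. exists (fun _ => b1), l. repeat split; auto using atom_le_one. apply Htau.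
Qed.

Lemma Bprod_box {X} (tau : (X -> B) -> Prop) l1 l2 c :
  tau l1 -> tau l2 -> Bprod tau (fun q => Bmeet (Bmeet (l1 (fst q)) (l2 (snd q))) c).
Proof.
  intros H1 H2. assert (HP : is_Btopology (Bprod tau)) by apply Bgenerated_Btopology.
  destruct HP as [_ [_ Pmeet]].
  repeat apply Pmeet; intros T _ Hgen; apply Hgen; eauto 6.
Qed.

(* The diagonal point (z, z) has Omega = 1, so a rectangle avoiding Omega at level k
   consists of two disjoint tau[k]-open sets. *)
Lemma B_R1_separation_atom {X} (tau : (X -> B) -> Prop) k :
  is_Btopology tau -> B_R1 tau -> R1_separation (cut tau (atom k)).
Proof.
  intros Htau HR x y Hyx.
  assert (Hk : Ble (atom k) (Bneg (Omega tau (x, y)))).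
  { rewrite atom_le_neg, atom_le_Omega. exact Hyx. }
  destruct (Bprod_rect_open tau _ Htau HR k (x, y) Hk)
    as [l1 [l2 [H1 [H2 [H1x [H2y Hrect]]]]]].
  exists (fun z => Ble (atom k) (l1 z)), (fun z => Ble (atom k) (l2 z)).
  repeat split; auto using cut_level.
  intros z [Hz1 Hz2]. specialize (Hrect (z, z) Hz1 Hz2).
  rewrite atom_le_neg, atom_le_Omega in Hrect. apply Hrect. intros U _ Uz; exact Uz.
Qed.

Lemma R1_separation_B_R1 {X} (tau : (X -> B) -> Prop) :
  is_Btopology tau -> (forall k, R1_separation (cut tau (atom k))) -> B_R1 tau.
Proof.
  intros Htau Hsep. unfold B_R1, Bclosed. apply Btopology_local; [apply Bgenerated_Btopology |].
  intros [x y] k Hk. rewrite atom_le_neg, atom_le_Omega in Hk.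
  destruct (Hsep k x y Hk) as [U [V [[l1 [H1 HU]] [[l2 [H2 HV]] [Ux [Vy Hdisj]]]]]].
  exists (fun q => Bmeet (Bmeet (l1 (fst q)) (l2 (snd q))) (atom k)).
  split; [apply Bprod_box; auto | split].
  - intros [a b]. apply Ble_atoms. intros k' Hbox. simpl in Hbox.
    rewrite !atom_le_meet, atom_le_atom in Hbox. destruct Hbox as [[Ha Hb] ->].
    rewrite atom_le_neg, atom_le_Omega. intros Hba.
    apply (Hdisj b). split; [apply (Hba U); [exists l1 |]; firstorder | apply HV, Hb].
  - simpl. rewrite !atom_le_meet, atom_le_atom. repeat split; [apply HU, Ux | apply HV, Vy].
Qed.

Lemma B_R1_separation {X} (tau : (X -> B) -> Prop) :
  is_Btopology tau -> (B_R1 tau <-> forall k, R1_separation (cut tau (atom k))).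
Proof.
  intros Htau. split.
  - intros HR k. exact (B_R1_separation_atom tau k Htau HR).
  - exact (R1_separation_B_R1 tau Htau).
Qed.

Lemma B_T0_top_T0 {X} (tau : (X -> B) -> Prop) :
  B_T0 tau <-> top_T0 (top_join (cut tau (atom true)) (cut tau (atom false))).
Proof.
  split.
  - intros HT0 x y Hxy. apply NNPP; intro Hnosep. apply Hxy, HT0; apply Omega_eq_one;
      intros k U HU Uz; apply NNPP; intro Hn; apply Hnosep; exists U;
      (split; [exact (cut_incl_join tau k U HU) | tauto]).
  - intros HT0 x y Hxy Hyx. rewrite Omega_eq_one in Hxy, Hyx.
    apply NNPP; intro Hne. destruct (HT0 x y Hne) as [U [HU Hsep]].
    (* the sets containing both or neither of x, y form a topology containing both cuts *)
    assert (Hinv : (fun U => U x <-> U y) U).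
    { apply HU.
      - split; [tauto | split].
        + intros F HF. split; intros [V [FV Vz]]; exists V; specialize (HF V FV); tauto.
        + intros U1 U2 H1 H2. tauto.
      - intros V [HV | HV]; split; [apply (Hxy true) | apply (Hyx true) | apply (Hxy false) | apply (Hyx false)]; exact HV. }
    simpl in Hinv. tauto.
Qed.

Theorem mainTheorem15 (X : Type) (tau : (X -> B) -> Prop) :
  is_Btopology tau ->
  (B_R1 tau <-> top_R1 (cut tau btt) /\ top_R1 (cut tau bff)) /\
  (B_Hausdorff tau <->
     top_R1 (cut tau btt) /\ top_R1 (cut tau bff) /\
     top_T0 (top_join (cut tau btt) (cut tau bff))).
Proof.
  intros Htau.
  change btt with (atom true). change bff with (atom false).
  assert (HR1 : B_R1 tau <-> top_R1 (cut tau (atom true)) /\ top_R1 (cut tau (atom false))).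
  { rewrite B_R1_separation, !top_R1_separation by exact Htau.
    split; [auto | intros [Ht Hf] []; assumption]. }
  split; [exact HR1 |].
  unfold B_Hausdorff. rewrite B_T0_top_T0, HR1. tauto.
Qed.
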